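(* Let $\mathbf{A}$ be a $0$-$1$ matrix of full row rank with $I$ columns and at least one $1$ in every column, and let $RM_{\boldsymbol\lambda}(\mathbf{A})=\{\boldsymbol\lambda\in\mathbb{R}^I_{>0}:\ \log\boldsymbol\lambda=\mathbf{A}'\boldsymbol\theta \text{ for some }\boldsymbol\theta\}$. Let $\{\boldsymbol\lambda_0^{r}\}_{r\ge1}\subset RM_{\boldsymbol\lambda}(\mathbf{A})$ be a sequence of true parameters with $\|\boldsymbol\lambda_0^r\|:=\min_{i}\lambda^r_{0,i}\to\infty$, and for each $r$ let $\boldsymbol Y^r=(Y^r_1,\dots,Y^r_I)$ have independent components $Y^r_i\sim\mathrm{Poisson}(\lambda^r_{0,i})$. Assume that the maximum likelihood estimate $\hat{\boldsymbol\lambda}^r$ of $\boldsymbol\lambda_0^r$ under $RM_{\boldsymbol\lambda}(\mathbf{A})$ exists. Then $$\Delta[(\boldsymbol\lambda_0^r)^{-1/2}]\,(\hat{\boldsymbol\lambda}^r-\boldsymbol\lambda_0^r)=O_p(\mathbf 1)\quad\text{as } \|\boldsymbol\lambda_0^r\|\to\infty.$$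
   Context: $\Delta[\boldsymbol v]$ denotes the diagonal matrix with the vector $\boldsymbol v$ on its diagonal; powers and logarithms of vectors are taken componentwise. $\|\boldsymbol\lambda\|$ denotes the minimum component $\min_i\lambda_i$ (not a standard norm). The MLE under the model is the maximizer over $RM_{\boldsymbol\lambda}(\mathbf{A})$ of the Poisson log-likelihood $\boldsymbol Y'\log\boldsymbol\lambda-\mathbf 1'\boldsymbol\lambda$; it is said to exist when this maximum is attained in $RM_{\boldsymbol\lambda}(\mathbf{A})$. *)

From HB Require Import structures.
From mathcomp Require Import all_boot all_order all_algebra.
From mathcomp Require Import all_classical all_reals all_analysis.
From mathcomp Require Import poisson_distribution.

Set Implicit Arguments. Unset Strict Implicit. Unset Printing Implicit Defensive.
Import Order.TTheory GRing.Theory Num.Theory.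
Local Open Scope ring_scope.

Definition zero_one_mx (R : realType) (J I : nat) (A : 'M[R]_(J, I)) : Prop :=
  forall j i, A j i = 0 \/ A j i = 1.

Definition full_row_rank (R : realType) (J I : nat) (A : 'M[R]_(J, I)) : Prop :=
  \rank A = J.

Definition col_has_one (R : realType) (J I : nat) (A : 'M[R]_(J, I)) : Prop :=
  forall i : 'I_I, exists j : 'I_J, A j i = 1.

Definition RM (R : realType) (J I : nat) (A : 'M[R]_(J, I)) : set 'cV[R]_I :=
  [set lam : 'cV[R]_I | (forall i, 0 < lam i 0) /\
             exists theta : 'cV[R]_J, map_mx (@ln R) lam = A^T *m theta].

Definition loglik (R : realType) (I : nat) (y : {ffun 'I_I -> nat}) (lam : 'cV[R]_I) : R :=
  \sum_(i < I) ((y i)%:R * ln (lam i 0) - lam i 0).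

Definition is_MLE (R : realType) (J I : nat) (A : 'M[R]_(J, I))
    (y : {ffun 'I_I -> nat}) (lamh : 'cV[R]_I) : Prop :=
  RM A lamh /\ forall lam, RM A lam -> loglik y lam <= loglik y lamh.

Definition pois_vec_pmf (R : realType) (I : nat) (lam : 'cV[R]_I)
    (y : {ffun 'I_I -> nat}) : R :=
  \prod_(i < I) poisson_pmf (lam i 0) (y i).

Definition pois_prob (R : realType) (I : nat) (lam : 'cV[R]_I)
    (E : set {ffun 'I_I -> nat}) : \bar R :=
  (\esum_(y in E) (pois_vec_pmf lam y)%:E)%R.

Definition min_to_infty (R : realType) (I : nat) (lam0 : nat -> 'cV[R]_I) : Prop :=
  forall K : R, exists r0 : nat, forall r, (r0 <= r)%N -> forall i, K <= lam0 r i 0.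

Definition big_error_event (R : realType) (J I : nat) (A : 'M[R]_(J, I))
    (lam0 : 'cV[R]_I) (M : R) : set {ffun 'I_I -> nat} :=
  [set y : {ffun 'I_I -> nat} | exists lamh : 'cV[R]_I, is_MLE A y lamh /\
     exists i, M < `| (lamh i 0 - lam0 i 0) / Num.sqrt (lam0 i 0) |].

From HB Require Import structures.
From mathcomp Require Import all_boot all_order all_algebra.
From mathcomp Require Import all_classical all_reals all_analysis.
From mathcomp Require Import poisson_distribution.
From mathcomp Require Import ring lra.
Set Implicit Arguments. Unset Strict Implicit. Unset Printing Implicit Defensive.
Import Order.TTheory GRing.Theory Num.Theory.
Local Open Scope ring_scope.

(** Write a competitor of the true mean vector [lam] as [lam * exp s].  Since
   the MLE has at least the likelihood of [lam],
   [\sum_i lam_i (exp s_i - 1 - s_i) <= \sum_i (Y_i - lam_i) s_i].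
   If every [|Y_i - lam_i| <= K sqrt lam_i], the right side is at most
   [K I max_i sqrt lam_i |s_i|]; comparing with the left side at the maximizing
   index shows [sqrt lam_i |s_i| <= 4 K I] for all [i] once [min_i lam_i >= (8 K I)^2],
   and then [|lamh_i - lam_i| / sqrt lam_i <= 8 K I].  The remaining event has
   probability at most [I / K^2] by Markov's inequality for Pearson's statistic
   [\sum_i (Y_i - lam_i)^2 / lam_i], whose mean is at most [I]; the esum defining
   the probability is controlled through finite boxes of count vectors. *)

Section Deterministic.
Variable R : realType.
Implicit Types (y s l c : R).

Lemma expR_sub1_ge_sqr s : -2 <= s -> s ^+ 2 / 4 <= expR s - 1 - s.
Proof.
move=> s_ge.
have expR_sq : expR s = expR (s / 2) ^+ 2 by rewrite -expRM_natr; congr expR; lra.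
have : (1 + s / 2) ^+ 2 <= expR (s / 2) ^+ 2.
  by rewrite ler_sqr ?nnegrE ?expR_ge0 ?expR_ge1Dx //; lra.
rewrite -expR_sq; nra.
Qed.

Lemma norm_expR_sub1_le s : `|s| <= 1 / 2 -> `|expR s - 1| <= 2 * `|s|.
Proof.
move=> s_small.
have expR_ge := expR_ge1Dx s; have expRN_ge := expR_ge1Dx (- s).
have expRN_gt0 := expR_gt0 (- s); have expR_inv := expRxMexpNx_1 s.
move: s_small; case: (lerP 0 s) => [s_ge0|s_lt0].
  by rewrite (ger0_norm s_ge0) ger0_norm; nra.
by rewrite (ltr0_norm s_lt0) ler0_norm; nra.
Qed.

Lemma tilt_bound l s c : 0 < c -> 8 * c <= Num.sqrt l ->
  l * (expR s - 1 - s) <= c * (Num.sqrt l * `|s|) -> Num.sqrt l * `|s| <= 4 * c.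
Proof.
move=> c_gt0 sqrt_ge.
have l_gt0 : 0 < l by rewrite -sqrtr_gt0; lra.
have lE : l = Num.sqrt l ^+ 2 by rewrite sqr_sqrtr ?ltW.
have expR_pos := expR_gt0 s.
case: (lerP (-2) s) => [s_ge|s_lt].
  have := expR_sub1_ge_sqr s_ge.
  rewrite {1}lE -[s ^+ 2]real_normK ?num_real //; nra.
rewrite {1}lE ltr0_norm; nra.
Qed.

Lemma norm_tilt_error_le l s : 0 < l -> `|s| <= 1 / 2 ->
  `|(l * expR s - l) / Num.sqrt l| <= 2 * (Num.sqrt l * `|s|).
Proof.
move=> l_gt0 s_small; have sqrt_gt0 : 0 < Num.sqrt l by rewrite sqrtr_gt0.
have -> : (l * expR s - l) / Num.sqrt l = Num.sqrt l * (expR s - 1).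
  rewrite -{1 2}(sqr_sqrtr (ltW l_gt0)); field; exact: lt0r_neq0.
rewrite normrM (gtr0_norm sqrt_gt0) mulrCA ler_pM2l //.
exact: norm_expR_sub1_le.
Qed.

Lemma loglik_tiltE y l s : 0 < l ->
  (y * ln (l * expR s) - l * expR s) - (y * ln l - l)
  = (y - l) * s - l * (expR s - 1 - s).
Proof. by move=> l_gt0; rewrite lnM ?posrE ?expR_gt0 // expRK; ring. Qed.

Lemma max_tilt_bound (T : finType) (lam y s : T -> R) (K : R) (i : T) :
  0 < K -> (forall j, 0 < lam j) ->
  (forall j, 8 * (K * #|T|%:R) <= Num.sqrt (lam j)) ->
  (forall j, `|y j - lam j| <= K * Num.sqrt (lam j)) ->
  \sum_j lam j * (expR (s j) - 1 - s j) <= \sum_j (y j - lam j) * s j ->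
  Num.sqrt (lam i) * `|s i| <= 4 * (K * #|T|%:R).
Proof.
move=> K_gt0 lam_gt0 sqrt_ge dev_le tilt_le; set c := K * #|T|%:R.
have c_gt0 : 0 < c by rewrite mulr_gt0 // ltr0n; apply/card_gt0P; exists i.
pose w j := Num.sqrt (lam j) * `|s j|.
have [j _ w_max] := @arg_maxP _ _ _ i xpredT w isT.
suff : w j <= 4 * c by apply: le_trans (w_max i isT).
apply: tilt_bound c_gt0 (sqrt_ge j) _.
have tilt_ge0 k : 0 <= lam k * (expR (s k) - 1 - s k).
  by apply: mulr_ge0; [exact: ltW | have := expR_ge1Dx (s k); lra].
apply: le_trans (_ : _ <= \sum_k lam k * (expR (s k) - 1 - s k)) _.
  by rewrite (bigD1 j) //= lerDl sumr_ge0.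
have -> : c * w j = \sum_(k : T) K * w j.
  by rewrite sumr_const -mulr_natr /c mulrAC.
apply: (le_trans tilt_le); apply: ler_sum => k _; apply: (le_trans (ler_norm _)).
rewrite normrM; apply: le_trans (ler_wpM2l (ltW K_gt0) (w_max k isT)).
by rewrite /w mulrA ler_wpM2r.
Qed.

Lemma mle_std_error_le (T : finType) (y lam lh : T -> R) (K : R) :
  0 < K -> (forall i, 0 < lam i) -> (forall i, 0 < lh i) ->
  (forall i, 8 * (K * #|T|%:R) <= Num.sqrt (lam i)) ->
  (forall i, `|y i - lam i| <= K * Num.sqrt (lam i)) ->
  \sum_i (y i * ln (lam i) - lam i) <= \sum_i (y i * ln (lh i) - lh i) ->
  forall i, `|(lh i - lam i) / Num.sqrt (lam i)| <= 8 * (K * #|T|%:R).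
Proof.
move=> K_gt0 lam_gt0 lh_gt0 sqrt_ge dev_le mle i.
pose s j := ln (lh j) - ln (lam j).
have lhE j : lh j = lam j * expR (s j).
  by rewrite expRB !lnK ?posrE // mulrC divfK // lt0r_neq0.
have w_le j : Num.sqrt (lam j) * `|s j| <= 4 * (K * #|T|%:R).
  apply: max_tilt_bound => //; rewrite -subr_ge0 -sumrB.
  have gain k : (y k - lam k) * s k - lam k * (expR (s k) - 1 - s k)
      = (y k * ln (lh k) - lh k) - (y k * ln (lam k) - lam k).
    by rewrite lhE loglik_tiltE.
  by rewrite (eq_bigr _ (fun k _ => gain k)) sumrB subr_ge0.
have s_small : `|s i| <= 1 / 2.
  have := w_le i; have := sqrt_ge i; have : 0 < Num.sqrt (lam i) by rewrite sqrtr_gt0.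
  nra.
rewrite lhE; apply: le_trans (norm_tilt_error_le (lam_gt0 i) s_small) _.
by have := w_le i; lra.
Qed.

End Deterministic.

Section PoissonMoments.
Variable R : realType.
Implicit Types (x l : R).

Lemma sum_exp_coeff_le_expR x N : 0 <= x -> \sum_(k < N) x ^+ k / k`!%:R <= expR x.
Proof.
move=> x_ge0; rewrite expRE /=.
have -> : pseries (fun k => k`!%:R^-1) x = series (exp_coeff x) by rewrite exp_coeffE.
have -> : \sum_(k < N) x ^+ k / k`!%:R = series (exp_coeff x) N.
  by rewrite /series /= big_mkord.
apply: nondecreasing_cvgn_le; last exact: is_cvg_series_exp_coeff.
apply: nondecreasing_series => k _ _.
by rewrite /exp_coeff divr_ge0 ?exprn_ge0.
Qed.

Lemma poisson_pmf_sum_le1 l N : 0 < l -> \sum_(k < N) poisson_pmf l k <= 1.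
Proof.
move=> l_gt0; rewrite /poisson_pmf l_gt0 -mulr_suml -[leRHS](expRxMexpNx_1 l).
by apply: ler_wpM2r; [exact: expR_ge0 | exact: sum_exp_coeff_le_expR (ltW l_gt0)].
Qed.

Lemma poisson_pmfS l k : 0 < l ->
  poisson_pmf l k.+1 * k.+1%:R = l * poisson_pmf l k.
Proof.
move=> l_gt0; rewrite /poisson_pmf l_gt0 factS natrM exprS invfM.
by field; rewrite addrC natr1 !pnatr_eq0 -lt0n fact_gt0.
Qed.

Lemma poisson_sqdev_sumE l N : 0 < l ->
  \sum_(k < N.+1) poisson_pmf l k * (k%:R - l) ^+ 2
  = l * \sum_(k < N.+1) poisson_pmf l k - l * poisson_pmf l N * (N.+1%:R - l).
Proof.
move=> l_gt0; elim: N => [|N IH].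
  by rewrite !big_ord_recr !big_ord0 /poisson_pmf l_gt0 /=; ring.
rewrite big_ord_recr IH [in RHS]big_ord_recr /= -(@poisson_pmfS l N l_gt0).
by rewrite -[N.+2%:R]natr1; ring.
Qed.

Lemma poisson_sqdev_sum_le l N : 0 < l ->
  \sum_(k < N) poisson_pmf l k * (k%:R - l) ^+ 2 <= l.
Proof.
move=> l_gt0; set M := (N + Num.Def.archi_bound l)%N.
have term_ge0 k : 0 <= poisson_pmf l k * (k%:R - l) ^+ 2.
  by rewrite mulr_ge0 ?poisson_pmf_ge0 ?sqr_ge0.
apply: le_trans (_ : _ <= \sum_(k < M.+1) poisson_pmf l k * (k%:R - l) ^+ 2) _.
  rewrite (big_ord_widen M.+1 (fun k => poisson_pmf l k * (k%:R - l) ^+ 2)).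
    by rewrite big_mkcond; apply: ler_sum => k _; case: ifP.
  exact: leqW (leq_addr _ _).
have l_le : l <= M.+1%:R.
  apply: ltW; apply: (lt_le_trans (archi_boundP (ltW l_gt0))).
  by rewrite ler_nat; apply/leqW/leq_addl.
rewrite poisson_sqdev_sumE // -[leRHS]mulr1 lerBlDr.
apply: ler_wpDr.
  by rewrite !mulr_ge0 ?poisson_pmf_ge0 // ?subr_ge0 // ltW.
by rewrite ler_pM2l // poisson_pmf_sum_le1.
Qed.

End PoissonMoments.

Definition ffun_nat (T : finType) (N : nat) (b : {ffun T -> 'I_N}) : {ffun T -> nat} :=
  [ffun i => nat_of_ord (b i)].

Lemma ffun_natE (T : finType) (N : nat) (b : {ffun T -> 'I_N}) i : ffun_nat b i = b i.
Proof. exact: ffunE. Qed.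

Definition pearson (R : realType) (T : finType) (lam : T -> R) (y : {ffun T -> nat}) : R :=
  \sum_i ((y i)%:R - lam i) ^+ 2 / lam i.

Lemma big_ffun_prod_coord (R : comNzRingType) (T U : finType) (p : T -> U -> R)
    (f : U -> R) (k : T) :
  \sum_(b : {ffun T -> U}) (\prod_i p i (b i)) * f (b k)
  = \prod_i \sum_u p i u * (if i == k then f u else 1).
Proof.
rewrite bigA_distr_bigA; apply: eq_bigr => b _; rewrite big_split /=.
by rewrite [X in _ = _ * X](bigD1 k) //= eqxx [X in f _ * X]big1 ?mulr1 // => i /negPf ->.
Qed.

Section BoxSums.
Variable R : realType.

Lemma poisson_box_pearson_le (T : finType) (lam : T -> R) N : (forall i, 0 < lam i) ->
  \sum_(b : {ffun T -> 'I_N}) (\prod_i poisson_pmf (lam i) (b i)) * pearson lam (ffun_nat b)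
  <= #|T|%:R.
Proof.
move=> lam_gt0; under eq_bigr => b _ do rewrite /pearson mulr_sumr.
rewrite exchange_big /= -[leRHS]sumr_const; apply: ler_sum => k _.
under eq_bigr => b _ do rewrite ffun_natE.
rewrite (big_ffun_prod_coord (fun i (u : 'I_N) => poisson_pmf (lam i) u)
  (fun u : 'I_N => (u%:R - lam k) ^+ 2 / lam k)).
apply: prodr_ile1 => i _; case: eqP => [->|_].
  under eq_bigr do rewrite mulrA; rewrite -mulr_suml.
  rewrite divr_ge0 ?sumr_ge0 ?ler_pdivrMr ?mul1r ?poisson_sqdev_sum_le ?ltW //.
  by move=> u _; rewrite mulr_ge0 ?poisson_pmf_ge0 ?sqr_ge0.
under eq_bigr do rewrite mulr1.
by rewrite sumr_ge0 ?poisson_pmf_sum_le1 // => u _; exact: poisson_pmf_ge0.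
Qed.

Lemma sum_le_box_sum (T : finType) (F : {ffun T -> nat} -> R) (s : seq {ffun T -> nat}) :
  uniq s -> (forall y, 0 <= F y) ->
  exists N, \sum_(y <- s) F y <= \sum_(b : {ffun T -> 'I_N}) F (ffun_nat b).
Proof.
move=> s_uniq F_ge0; set N := (\sum_(y <- s) \sum_i y i).+1; exists N.
pose box (y : {ffun T -> nat}) : {ffun T -> 'I_N} := [ffun i => inord (y i)].
have boxK y : y \in s -> ffun_nat (box y) = y.
  move=> y_s; apply/ffunP => i; rewrite !ffunE inordK // ltnS.
  apply: (@leq_trans (\sum_i y i)); first by rewrite (bigD1 i) //= leq_addr.
  by rewrite (big_rem y y_s) /= leq_addr.
have -> : \sum_(y <- s) F y = \sum_(b <- map box s) F (ffun_nat b).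
  by rewrite big_map big_seq [RHS]big_seq; apply: eq_bigr => y /boxK ->.
rewrite big_uniq; last first.
  rewrite map_inj_in_uniq // => y z y_s z_s /(congr1 (@ffun_nat T N)).
  by rewrite !boxK.
by rewrite big_mkcond; apply: ler_sum => b _; case: ifP.
Qed.

Lemma pois_prob_le_markov (I : nat) (lam : 'cV[R]_I) (E : set {ffun 'I_I -> nat})
    (H : {ffun 'I_I -> nat} -> R) (t c : R) :
  0 < t -> (forall y, 0 <= H y) -> (forall y, E y -> t <= H y) ->
  (forall N, \sum_(b : {ffun 'I_I -> 'I_N})
     (\prod_i poisson_pmf (lam i 0) (b i)) * H (ffun_nat b) <= c) ->
  (pois_prob lam E <= (c / t)%:E)%E.
Proof.
move=> t_gt0 H_ge0 E_ge box_le.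
have pmf_ge0 y : 0 <= pois_vec_pmf lam y.
  by apply: prodr_ge0 => i _; exact: poisson_pmf_ge0.
apply: ge_ereal_sup => _ [X [X_fin X_E] <-].
rewrite fsumEFin // lee_fin fsbig_finite //= ler_pdivlMr // mulr_suml.
have [N sum_le] := sum_le_box_sum (finmap.fset_uniq (fset_set X))
  (fun y => mulr_ge0 (pmf_ge0 y) (H_ge0 y)).
apply: le_trans (box_le N); apply: le_trans (le_trans _ sum_le) _.
  rewrite big_seq [leRHS]big_seq; apply: ler_sum => y.
  rewrite in_fset_set // inE => /X_E/E_ge.
  exact: ler_wpM2l.
apply: ler_sum => b _; suff -> : pois_vec_pmf lam (ffun_nat b)
  = \prod_i poisson_pmf (lam i 0) (b i) by [].
by apply: eq_bigr => i _; rewrite ffun_natE.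
Qed.

End BoxSums.

Lemma pearson_ge0 (R : realType) (T : finType) (lam : T -> R) (y : {ffun T -> nat}) :
  (forall i, 0 < lam i) -> 0 <= pearson lam y.
Proof. by move=> lam_gt0; apply: sumr_ge0 => i _; rewrite divr_ge0 ?sqr_ge0 ?ltW. Qed.

Lemma big_error_event_pearson (R : realType) (J I : nat) (A : 'M[R]_(J, I))
    (lam : 'cV[R]_I) (K : R) (y : {ffun 'I_I -> nat}) :
  0 < K -> RM A lam -> (forall i, (8 * (K * I%:R)) ^+ 2 <= lam i 0) ->
  big_error_event A lam (8 * (K * I%:R)) y -> K ^+ 2 <= pearson (fun i => lam i 0) y.
Proof.
move=> K_gt0 lam_RM lam_ge [lh [[lh_RM lh_mle] [i err]]].
have lam_gt0 := lam_RM.1.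
have [/forallP dev_le | /forallPn [k]] :=
  boolP [forall k, `|(y k)%:R - lam k 0| <= K * Num.sqrt (lam k 0)].
  move: err; rewrite ltNge => /negP[]; rewrite -[in leRHS](card_ord I).
  apply: (@mle_std_error_le _ _ (fun k => (y k)%:R) (fun k => lam k 0)
    (fun k => lh k 0)) => //; first exact: lh_RM.1.
    move=> k; rewrite card_ord -[leLHS]ger0_norm -?sqrtr_sqr ?ler_wsqrtr //.
    by rewrite !mulr_ge0 ?ler0n ?ltW.
  exact: lh_mle.
rewrite -ltNge => dev_gt; rewrite /pearson (bigD1 k) //=.
apply: ler_wpDr; first by apply: sumr_ge0 => j _; rewrite divr_ge0 ?sqr_ge0 ?ltW.
move: dev_gt; set d := (y k)%:R - lam k 0 => dev_gt.
have sqrt_gt0 : 0 < Num.sqrt (lam k 0) by rewrite sqrtr_gt0.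
rewrite ler_pdivlMr // -[in leLHS](sqr_sqrtr (ltW (lam_gt0 k))) -exprMn.
rewrite -(real_normK (num_real d)) ler_sqr ?nnegrE ?(ltW dev_gt) //.
by rewrite mulr_ge0 // ltW.
Qed.

Theorem lemma3p3 (R : realType) (J I : nat) (A : 'M[R]_(J, I))
  (lam0 : nat -> 'cV[R]_I) :
  zero_one_mx A -> full_row_rank A -> col_has_one A ->
  (forall r, RM A (lam0 r)) ->
  min_to_infty lam0 ->
  forall eps : R, 0 < eps ->
  exists M : R, exists r0 : nat, forall r, (r0 <= r)%N ->
    (pois_prob (lam0 r) (big_error_event A (lam0 r) M) <= eps%:E)%E.
Proof.
move=> _ _ _ lam0_RM lam0_big eps eps_gt0.
pose K := I%:R / eps + 1.
have K_ge1 : 1 <= K by rewrite /K lerDr divr_ge0 // ltW.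
have K_gt0 : 0 < K by lra.
exists (8 * (K * I%:R)).
have [r0 lam0_ge] := lam0_big ((8 * (K * I%:R)) ^+ 2).
exists r0 => r r0_le; have lam_gt0 := (lam0_RM r).1.
apply: le_trans (pois_prob_le_markov (t := K ^+ 2) (exprn_gt0 _ K_gt0)
  (fun y => pearson_ge0 y lam_gt0)
  (fun y => big_error_event_pearson K_gt0 (lam0_RM r) (lam0_ge r r0_le))
  (fun N => poisson_box_pearson_le N lam_gt0)) _.
rewrite lee_fin card_ord ler_pdivrMr ?exprn_gt0 //.
have : I%:R <= eps * K by rewrite /K mulrDr mulrCA divff ?mulr1 ?gt_eqF //; lra.
have : K <= K ^+ 2 by rewrite expr2 ler_peMr // ltW.
nra.
Qed.
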